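(* Let $\lambda\in\mathbf{C}$ with $\lambda\neq1$. For every $n\in\mathbf{Z}_{+}$ (nonnegative integers), \[ \frac{1}{n+1}\sum_{k=0}^{n}H_{k}(x\vert\lambda)H_{n-k}(x\vert\lambda) =\sum_{k=0}^{n-1}\frac{\binom{n}{k}}{n-k+1}\Bigl\{-\lambda\sum_{l=k}^{n}H_{l-k}(\lambda)H_{n-l}(\lambda)+2\lambda H_{n-k}(\lambda)\Bigr\}H_{k}(x\vert\lambda)+H_{n}(x\vert\lambda). \]
   Context: For $\lambda\in\mathbf{C}$, $\lambda\neq1$, the Frobenius–Euler polynomials $H_n(x\vert\lambda)$ are defined by the generating function $\frac{1-\lambda}{e^{t}-\lambda}e^{xt}=\sum_{n=0}^{\infty}H_{n}(x\vert\lambda)\frac{t^{n}}{n!}$, and the Frobenius–Euler numbers are $H_n(\lambda)=H_n(0\vert\lambda)$. An empty sum (e.g. when $n=0$) is $0$. *)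

From HB Require Import structures.
From mathcomp Require Import all_boot all_order all_algebra.
From mathcomp Require Import reals.
From mathcomp.real_closed Require Import complex.
Set Implicit Arguments. Unset Strict Implicit. Unset Printing Implicit Defensive.
Import Order.TTheory GRing.Theory Num.Theory.
Local Open Scope ring_scope.

(* [FE_gen lam H] says that [H n x] (playing the role of H_n(x|lam)) is given
   by the generating function
       (1 - lam) / (e^t - lam) * e^(x t) = \sum_n H_n(x|lam) t^n / n!,
   read as an identity of formal (exponential) power series in t, i.e.
       (e^t - lam) * \sum_n H_n(x|lam) t^n/n! = (1 - lam) e^(x t).
   Comparing the coefficients of t^n / n! on both sides (Cauchy product of
   exponential generating functions) gives exactly the identity below, for
   every x and every n. Since lam <> 1 it determines H uniquely. *)
Definition FE_gen (R : realType) (lam : R[i]) (H : nat -> R[i] -> R[i]) : Prop :=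
  forall (x : R[i]) (n : nat),
    \sum_(k < n.+1) 'C(n, k)%:R * H k x - lam * H n x = (1 - lam) * x ^+ n.

Definition FE_num (R : realType) (H : nat -> R[i] -> R[i]) (n : nat) : R[i] := H n 0.

From HB Require Import structures.
From mathcomp Require Import all_boot all_order all_algebra.
From mathcomp Require Import reals.
From mathcomp.real_closed Require Import complex.
From mathcomp Require Import zify ring.
Set Implicit Arguments. Unset Strict Implicit. Unset Printing Implicit Defensive.
Import Order.TTheory GRing.Theory Num.Theory.
Local Open Scope ring_scope.

(* Both sides of the identity are, as functions of x, Appell sequences of
   polynomials (P_n' = n P_(n-1)):
   H_n(x|lam) = \sum_k C(n,k) H_(n-k)(lam) x^k is one, the normalised
   self-convolution (n+1)^-1 \sum_k H_k H_(n-k) is one, and so is every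
   binomial convolution \sum_k C(n,k) c_(n-k) H_k.  Since lam <> 1, an Appell
   sequence is determined by the values of the functional
   fe_form p = p(1) - lam p(0), which is (1 - lam) c on a constant c.  As
   fe_form H_k = (1 - lam) [k = 0], the fe_form-values of a binomial
   convolution of the H_k are (1 - lam) c_n, and matching them with those of
   the self-convolution yields the coefficients of the right-hand side. *)

Section AppellSequences.
Variable F : numFieldType.
Implicit Types (P Q : nat -> {poly F}) (p : {poly F}) (c : nat -> F).

Definition appell P := forall n, (P n)^`() = n%:R *: P n.-1.

Definition binom_conv c P n := \sum_(k < n.+1) ('C(n, k)%:R * c (n - k)%N) *: P k.

Definition cauchy_prod P Q n := \sum_(k < n.+1) P k * Q (n - k)%N.

Lemma appell_Xn : appell (fun n => 'X^n).
Proof. by move=> n; rewrite derivXn scaler_nat. Qed.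

Lemma appellD P Q : appell P -> appell Q -> appell (fun n => P n + Q n).
Proof. by move=> hP hQ n; rewrite derivD hP hQ scalerDr. Qed.

Lemma appellZ a P : appell P -> appell (fun n => a *: P n).
Proof. by move=> hP n; rewrite derivZ hP !scalerA mulrC. Qed.

Lemma appell_binom_conv c P : appell P -> appell (binom_conv c P).
Proof.
move=> hP [|n]; rewrite /binom_conv.
  by rewrite big_ord_recl big_ord0 addr0 derivZ hP !scale0r scaler0.
rewrite linear_sum big_ord_recl /= derivZ hP scale0r scaler0 add0r scaler_sumr.
apply: eq_bigr => k _; rewrite derivZ hP !scalerA /bump /= add1n subSS.
congr (_ *: _).
have /(congr1 (fun t => t%:R : F)) := mul_bin_diag n.+1 k.
by rewrite /= !natrM => e; rewrite mulrC mulrA -e mulrA.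
Qed.

Lemma deriv_cauchy_prod P Q n : appell P -> appell Q ->
  (cauchy_prod P Q n.+1)^`() = n.+2%:R *: cauchy_prod P Q n.
Proof.
move=> hP hQ; rewrite /cauchy_prod linear_sum /=.
under eq_bigr => k _ do rewrite derivM hP hQ.
rewrite big_split /= [X in X + _]big_ord_recl [X in _ + X]big_ord_recr /=.
rewrite subn0 subnn !scale0r mul0r mulr0 add0r addr0 scaler_sumr -big_split /=.
apply: eq_bigr => k _; rewrite /bump /= add1n subSS -scalerAl -scalerAr add0n.
have -> : (n.+1 - k).-1 = (n - k)%N by have := ltn_ord k; lia.
by rewrite -scalerDl -natrD; congr (_%:R *: _); have := ltn_ord k; lia.
Qed.

Lemma appell_cauchy_prod P Q : appell P -> appell Q ->
  appell (fun n => n.+1%:R^-1 *: cauchy_prod P Q n).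
Proof.
move=> hP hQ [|n].
  rewrite derivZ /cauchy_prod big_ord_recl big_ord0 addr0 derivM hP hQ.
  by rewrite !scale0r mul0r mulr0 addr0 scaler0.
rewrite /= derivZ deriv_cauchy_prod // !scalerA mulVf ?pnatr_eq0 //.
by rewrite mulfV ?pnatr_eq0.
Qed.

Lemma deriv_eq0_polyC p : p^`() = 0 -> p = (p`_0)%:P.
Proof.
move=> dp0; apply/polyP => [[|i]]; rewrite coefC //=.
have /eqP := congr1 (fun q : {poly F} => q`_i) dp0.
by rewrite coef_deriv coef0 mulrn_eq0 /= => /eqP.
Qed.

Variable lam : F.

Definition fe_form p := p.[1] - lam * p.[0].

Lemma fe_formD p q : fe_form (p + q) = fe_form p + fe_form q.
Proof. by rewrite /fe_form !hornerD; ring. Qed.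

Lemma fe_formB p q : fe_form (p - q) = fe_form p - fe_form q.
Proof. by rewrite /fe_form !hornerE; ring. Qed.

Lemma fe_formZ a p : fe_form (a *: p) = a * fe_form p.
Proof. by rewrite /fe_form !hornerZ; ring. Qed.

Lemma fe_form_binom_conv c P n :
  fe_form (binom_conv c P n) =
  \sum_(k < n.+1) ('C(n, k)%:R * c (n - k)%N) * fe_form (P k).
Proof.
rewrite /fe_form /binom_conv !horner_sum mulr_sumr -sumrB.
by apply: eq_bigr => k _; rewrite !hornerZ; ring.
Qed.

Hypothesis lam_neq1 : lam != 1.

Lemma appell_kernel p : p^`() = 0 -> fe_form p = 0 -> p = 0.
Proof.
move=> /deriv_eq0_polyC pE; rewrite /fe_form pE !hornerC => fe_p0.
have /eqP : (1 - lam) * p`_0 = 0 by rewrite -[RHS]fe_p0; ring.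
rewrite mulf_eq0 subr_eq0 eq_sym (negbTE lam_neq1) /= => /eqP ->.
by rewrite polyC0.
Qed.

Lemma appell_fe_form_inj P Q : appell P -> appell Q ->
  (forall n, fe_form (P n) = fe_form (Q n)) -> forall n, P n = Q n.
Proof.
move=> hP hQ fePQ; elim=> [|n IHn]; apply/subr0_eq/appell_kernel;
  rewrite ?fe_formB ?fePQ ?subrr // derivB hP hQ.
- by rewrite !scale0r subrr.
- by rewrite /= IHn subrr.
Qed.

End AppellSequences.

Lemma binom_recurrence_inj (F : numFieldType) (lam : F) (f g : nat -> F) :
  lam != 1 ->
  (forall n, \sum_(k < n.+1) 'C(n, k)%:R * f k - lam * f n =
             \sum_(k < n.+1) 'C(n, k)%:R * g k - lam * g n) ->
  forall n, f n = g n.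
Proof.
move=> lam_neq1 fgE; elim/ltn_ind=> n IHn.
have := fgE n; rewrite !big_ord_recr /= binn.
under eq_bigr => k _ do rewrite IHn //.
move=> /eqP; rewrite -!addrA (inj_eq (addrI _)) => /eqP.
rewrite -[f n]mul1r -[g n]mul1r -!mulrBl.
by apply: mulfI; rewrite subr_eq0 eq_sym.
Qed.

Section FrobeniusEuler.
Variables (F : numFieldType) (lam : F) (H : nat -> F -> F).
Hypothesis lam_neq1 : lam != 1.
Hypothesis H_rec : forall x n,
  \sum_(k < n.+1) 'C(n, k)%:R * H k x - lam * H n x = (1 - lam) * x ^+ n.

Let h n := H n 0.

Lemma fe_num0 : h 0%N = 1.
Proof.
have := H_rec 0 0; rewrite big_ord_recl big_ord0 /= addr0 mul1r expr0 => e.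
have one_sub_lam_neq0 : 1 - lam != 0 by rewrite subr_eq0 eq_sym.
by apply: (mulfI one_sub_lam_neq0); rewrite -e /h; ring.
Qed.

Definition fe_poly := binom_conv h (fun k => 'X^k).

Lemma appell_fe_poly : appell fe_poly.
Proof. exact/appell_binom_conv/appell_Xn. Qed.

Lemma fe_poly0 n : (fe_poly n).[0] = h n.
Proof.
rewrite horner_sum big_ord_recl big1 => [|k _].
  by rewrite hornerZ hornerXn expr0 bin0 subn0 !mulr1 mul1r addr0.
by rewrite hornerZ hornerXn expr0n /= mulr0.
Qed.

Lemma fe_poly1 n : (fe_poly n).[1] = lam * h n + (1 - lam) * 0 ^+ n.
Proof.
have <- : \sum_(k < n.+1) 'C(n, k)%:R * h k = lam * h n + (1 - lam) * 0 ^+ n.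
  by rewrite -(H_rec 0 n) /h; ring.
rewrite horner_sum (reindex_inj rev_ord_inj) /=; apply: eq_bigr => k _.
have kn := ltn_ord k.
by rewrite hornerZ hornerXn expr1n mulr1 subSS subKn ?bin_sub.
Qed.

Lemma fe_form_fe_poly n : fe_form lam (fe_poly n) = (1 - lam) * 0 ^+ n.
Proof. by rewrite /fe_form fe_poly1 fe_poly0; ring. Qed.

Lemma fe_form_binom_conv_fe_poly c n :
  fe_form lam (binom_conv c fe_poly n) = (1 - lam) * c n.
Proof.
rewrite fe_form_binom_conv big_ord_recl big1 => [|k _].
  by rewrite fe_form_fe_poly bin0 subn0 expr0; ring.
by rewrite fe_form_fe_poly expr0n /= !mulr0.
Qed.

Lemma fe_poly_rec x n :
  \sum_(k < n.+1) 'C(n, k)%:R * (fe_poly k).[x] - lam * (fe_poly n).[x] =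
  (1 - lam) * x ^+ n.
Proof.
pose V m := binom_conv (fun=> 1) fe_poly m + (- lam) *: fe_poly m.
pose U m := (1 - lam) *: ('X^m : {poly F}).
have VU : forall m, V m = U m.
  apply: (appell_fe_form_inj lam_neq1).
  - exact/appellD/appellZ/appell_fe_poly/appell_binom_conv/appell_fe_poly.
  - exact/appellZ/appell_Xn.
  move=> m; rewrite fe_formD !fe_formZ fe_form_binom_conv_fe_poly fe_form_fe_poly.
  by rewrite /fe_form !hornerXn expr1n; ring.
move: (congr1 (horner^~ x) (VU n)); rewrite !hornerE horner_sum.
under eq_bigr => k _ do rewrite hornerZ mulr1.
by move=> <-; ring.
Qed.

Lemma fe_polyE n x : H n x = (fe_poly n).[x].
Proof.
apply: (binom_recurrence_inj (f := H^~ x) (g := fun k => (fe_poly k).[x]) lam_neq1).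
by move=> m; rewrite H_rec fe_poly_rec.
Qed.

Lemma fe_form_cauchy_fe_poly n :
  fe_form lam (cauchy_prod fe_poly fe_poly n) =
  (lam ^+ 2 - lam) * \sum_(k < n.+1) h k * h (n - k)%N
  + 2 * lam * (1 - lam) * h n + (1 - lam) ^+ 2 * 0 ^+ n.
Proof.
have sum_delta_l (f : nat -> F) :
    \sum_(k < n.+1) 0 ^+ k * f (n - k)%N = f n.
  rewrite big_ord_recl expr0 mul1r subn0 big1 ?addr0 // => k _.
  by rewrite expr0n mul0r.
have sum_delta_r (f : nat -> F) :
    \sum_(k < n.+1) f k * 0 ^+ (n - k)%N = f n.
  rewrite big_ord_recr /= subnn expr0 mulr1 big1 ?add0r // => k _.
  by rewrite expr0n subn_eq0 leqNgt ltn_ord mulr0.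
rewrite /fe_form /cauchy_prod !horner_sum mulr_sumr -sumrB.
under eq_bigr => k _ do rewrite !hornerM !fe_poly1 !fe_poly0.
rewrite (eq_bigr (fun k : 'I_n.+1 =>
    (lam ^+ 2 - lam) * (h k * h (n - k)%N)
    + lam * (1 - lam) * (h k * 0 ^+ (n - k))
    + lam * (1 - lam) * (0 ^+ k * h (n - k)%N)
    + (1 - lam) ^+ 2 * (0 ^+ k * 0 ^+ (n - k)))); last by move=> k _; ring.
by rewrite !big_split /= -!mulr_sumr sum_delta_l sum_delta_r sum_delta_l; ring.
Qed.

Definition cauchy_coef m :=
  if m == 0%N then 1
  else (- lam * \sum_(l < m.+1) h l * h (m - l)%N + 2 * lam * h m) / m.+1%:R.

Lemma cauchy_prod_fe_poly n :
  n.+1%:R^-1 *: cauchy_prod fe_poly fe_poly n = binom_conv cauchy_coef fe_poly n.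
Proof.
apply: (appell_fe_form_inj lam_neq1
  (P := fun m => m.+1%:R^-1 *: cauchy_prod fe_poly fe_poly m)) => [||m].
- exact/appell_cauchy_prod/appell_fe_poly/appell_fe_poly.
- exact/appell_binom_conv/appell_fe_poly.
rewrite fe_formZ fe_form_cauchy_fe_poly fe_form_binom_conv_fe_poly /cauchy_coef.
case: m => [|m] /=.
  by rewrite big_ord_recl big_ord0 subnn fe_num0 invr1 expr0; ring.
by rewrite expr0n /=; field; rewrite -natrD pnatr_eq0.
Qed.

End FrobeniusEuler.

Theorem theorem3 (R : realType) (lam : R[i]) (H : nat -> R[i] -> R[i]) :
  lam != 1 -> FE_gen lam H ->
  forall (n : nat) (x : R[i]),
    (n.+1)%:R^-1 * \sum_(k < n.+1) H k x * H (n - k)%N x =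
    \sum_(k < n)
       ('C(n, k)%:R / (n - k + 1)%:R) *
       (- lam * (\sum_(k <= l < n.+1) FE_num H (l - k) * FE_num H (n - l))
        + 2 * lam * FE_num H (n - k)) * H k x
    + H n x.
Proof.
move=> lam_neq1 H_rec n x; have HE := fe_polyE lam_neq1 H_rec.
have -> : \sum_(k < n.+1) H k x * H (n - k)%N x =
          (cauchy_prod (fe_poly H) (fe_poly H) n).[x].
  by rewrite horner_sum; apply: eq_bigr => k _; rewrite hornerM -!HE.
rewrite -hornerZ (cauchy_prod_fe_poly lam_neq1 H_rec) horner_sum big_ord_recr /=.
rewrite hornerZ -HE binn subnn /cauchy_coef eqxx !mul1r; congr (_ + _).
apply: eq_bigr => k _; rewrite hornerZ -HE; congr (_ * _).
have kn := ltn_ord k.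
have -> : (n - k == 0)%N = false by rewrite subn_eq0 leqNgt kn.
have -> : \sum_(k <= l < n.+1) FE_num H (l - k) * FE_num H (n - l) =
          \sum_(l < (n - k).+1) FE_num H l * FE_num H (n - k - l).
  rewrite -{1}(add0n k) big_addn big_mkord.
  rewrite (_ : n.+1 - k = (n - k).+1)%N; last by lia.
  by apply: eq_bigr => l _; rewrite addnK; congr (_ * FE_num H _); lia.
by rewrite addn1 /FE_num; ring.
Qed.
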